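(* Let $p,m,n\ge1$, let $a_1,\dots,a_n\in\mathbb{C}$ be distinct, let $m_1,\dots,m_n\ge1$ be integers, let $C_0,\dots,C_{m-1}$, $B_k^{(j)}$ be complex $p\times p$ matrices, let $\|\cdot\|$ be any induced matrix norm, and let $$R(\lambda)=I\lambda^m-C_{m-1}\lambda^{m-1}-\cdots-C_1\lambda-C_0+\sum_{j=1}^{n}\sum_{k=1}^{m_j}\frac{B_k^{(j)}}{(\lambda-a_j)^k}.$$ If $\lambda_0$ is an eigenvalue of $R(\lambda)$, then: (1) $|\lambda_0|\le\max_{1\le j\le n}\Big\{1+|a_j|,\ \sum_{j=1}^n\sum_{k=1}^{m_j}\|B_k^{(j)}\|+\sum_{i=0}^{m-1}\|C_i\|\Big\}$; (2) if every $m_j=1$ (writing $B^{(j)}=B^{(j)}_1$), then $|\lambda_0|\le\max_{1\le j\le n,\,1\le i\le m-1}\{|a_j|+\|B^{(j)}\|,\ 1+\|C_i\|,\ \|C_0\|+n\}$; otherwise $|\lambda_0|\le\max_{1\le j\le n,\,1\le k\le m_j,\,1\le i\le m-1}\Big\{|a_j|+\|B_k^{(j)}\|,\ 1+|a_j|,\ 1+\|C_i\|,\ \|C_0\|+\sum_{j=1}^n m_j\Big\}$; (3) $|\lambda_0|\le\frac{\alpha+\beta+\sqrt{(\alpha-\beta)^2+(\gamma+\delta)^2}}{2}$, where $\alpha=\max_{1\le j\le n}\{|a_j|+\cos(\frac{\pi}{m_j+1})\}$, $\beta=w(\mathcal{B}_0)$, $\gamma=\sqrt{\sum_{j=1}^n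 m_j}$, $\delta=\sqrt{\sum_{j=1}^n\sum_{k=1}^{m_j}\|B_k^{(j)}\|^2}$, and $\mathcal{B}_0$ is the $m\times m$ real matrix with $1$'s on the superdiagonal, last row $(\|C_0\|,\|C_1\|,\dots,\|C_{m-1}\|)$, and zeros elsewhere.
   Context: A scalar $\lambda_0\in\mathbb{C}\setminus\{a_1,\dots,a_n\}$ is an eigenvalue of $R(\lambda)$ if there is a nonzero $v\in\mathbb{C}^p$ with $R(\lambda_0)v=0$. For a square complex matrix $A$, $w(A)=\sup\{|x^*Ax|:x^*x=1\}$ is its numerical radius. *)

From HB Require Import structures.
From mathcomp Require Import all_boot all_order all_algebra.
From mathcomp Require Import complex.
From mathcomp Require Import classical_sets reals trigo.

Set Implicit Arguments.
Unset Strict Implicit.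
Unset Printing Implicit Defensive.

Import Order.TTheory GRing.Theory Num.Theory.
Local Open Scope ring_scope.
Local Open Scope classical_set_scope.

Section Defs.
Variable R : realType.

Definition cabs (z : R[i]) : R := ComplexField.Normc.normc z.

Definition is_vnorm (p : nat) (nu : 'cV[R[i]]_p -> R) : Prop :=
  [/\ (forall x, 0 <= nu x),
      (forall x, nu x = 0 -> x = 0),
      (forall (c : R[i]) x, nu (c *: x) = cabs c * nu x) &
      (forall x y, nu (x + y) <= nu x + nu y)].

Definition induced_norm (p : nat) (nu : 'cV[R[i]]_p -> R) (A : 'M[R[i]]_p) : R :=
  sup [set r : R | exists x : 'cV[R[i]]_p, nu x = 1 /\ r = nu (A *m x)].

Definition ctrmx (p q : nat) (A : 'M[R[i]]_(p, q)) : 'M[R[i]]_(q, p) :=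
  (map_mx (@conjc R) A)^T.

Definition numrad (q : nat) (A : 'M[R[i]]_q) : R :=
  sup [set r : R | exists x : 'cV[R[i]]_q,
         (ctrmx x *m x) 0 0 = 1 /\ r = cabs ((ctrmx x *m A *m x) 0 0)].

Definition Rmat (p m n : nat) (C : 'I_m -> 'M[R[i]]_p) (a : 'I_n -> R[i])
  (mj : 'I_n -> nat) (B : 'I_n -> nat -> 'M[R[i]]_p) (lam : R[i]) : 'M[R[i]]_p :=
  lam ^+ m *: 1%:M - \sum_(i < m) lam ^+ i *: C i
  + \sum_(j < n) \sum_(1 <= k < (mj j).+1) (lam - a j) ^- k *: B j k.

Definition is_eigenvalue (p m n : nat) (C : 'I_m -> 'M[R[i]]_p) (a : 'I_n -> R[i])
  (mj : 'I_n -> nat) (B : 'I_n -> nat -> 'M[R[i]]_p) (lam0 : R[i]) : Prop :=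
  (forall j, lam0 != a j) /\
  exists v : 'cV[R[i]]_p, v != 0 /\ Rmat C a mj B lam0 *m v = 0.

Definition compB0 (m : nat) (c : 'I_m -> R) : 'M[R]_m :=
  \matrix_(i < m, j < m)
     (if i.+1 == m then c j else if j == i.+1 :> nat then 1 else 0).

Definition rC (r : R) : R[i] := (r%:C)%C.

End Defs.

From HB Require Import structures.
From mathcomp Require Import all_boot all_order all_algebra.
From mathcomp Require Import complex.
From mathcomp Require Import classical_sets reals trigo.
From mathcomp Require Import ring lra.
From mathcomp Require Import topology normedtype derive matrix_normedtype.
Import Order.TTheory GRing.Theory Num.Theory.
Import numFieldNormedType.Exports.
Local Open Scope ring_scope.

Set Implicit Arguments.
Unset Strict Implicit.
Unset Printing Implicit Defensive.

(* Let R(lam0) v = 0 with nu v = 1, x = |lam0| and r_j = 1 / |lam0 - a_j|.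
   Isolating lam0^m v and taking norms gives the scalar inequality
     x^m <= sum_i ||C_i|| x^i + sum_j sum_k ||B_k^(j)|| r_j^k,
   and the triangle inequality gives x <= |a_j| + 1 / r_j.  All three bounds
   follow from these two facts alone.  For (1) and (2) one compares powers of
   x term by term.  For (3) put u = (1, x, ..., x^(m-1)) and
   f_j = (r_j, ..., r_j^(m_j)): the first inequality reads
   x |u|^2 <= u^T B_0 u + x^(m-1) sum ||B|| r^k, and the second, multiplied
   by |f_j|^2 and combined with the spectral radius 2 cos (pi / (m_j + 1)) of
   the path on m_j vertices, gives x |f|^2 <= alpha |f|^2 + sum_j r_j.
   Cauchy-Schwarz turns the sum into
   x (|f|^2 + |u|^2) <= alpha |f|^2 + beta |u|^2 + (gamma + delta) |f| |u|,
   so x is at most the largest eigenvalue of [[alpha, g/2], [g/2, beta]] with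
   g = gamma + delta.  That the induced norm is finite (so that the [sup]
   defining it is meaningful) uses the equivalence of nu with the coordinate
   norm, obtained from compactness of the unit sphere of R^(2p). *)

Section ComplexModulus.
Variable R : realType.
Implicit Types (z w : R[i]) (r : R).

Lemma cabs_ge0 z : 0 <= cabs z.
Proof. by case: z => a b; rewrite /cabs /= sqrtr_ge0. Qed.

Lemma cabs0 : cabs (0 : R[i]) = 0.
Proof. exact: ComplexField.Normc.normc0. Qed.

Lemma cabs1 : cabs (1 : R[i]) = 1.
Proof. exact: ComplexField.Normc.normc1. Qed.

Lemma cabsN z : cabs (- z) = cabs z.
Proof. exact: normcN. Qed.

Lemma cabs_gt0 z : (0 < cabs z) = (z != 0).
Proof.
rewrite lt_def cabs_ge0 andbT; apply/idP/idP; apply: contra => /eqP.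
  by move->; rewrite cabs0.
by move/ComplexField.Normc.eq0_normc ->.
Qed.

Lemma cabsM z w : cabs (z * w) = cabs z * cabs w.
Proof. exact: ComplexField.Normc.normcM. Qed.

Lemma cabsV z : cabs z^-1 = (cabs z)^-1.
Proof. exact: ComplexField.Normc.normcV. Qed.

Lemma cabsX z k : cabs (z ^+ k) = cabs z ^+ k.
Proof.
elim: k => [|k IHk]; first exact: cabs1.
by rewrite !exprS cabsM IHk.
Qed.

Lemma cabsD z w : cabs (z + w) <= cabs z + cabs w.
Proof. exact: le_normcD. Qed.

Lemma cabs_le_dist z w : cabs z <= cabs w + cabs (z - w).
Proof. by rewrite -{1}(subrK w z) addrC cabsD. Qed.

Lemma cabs_sum (I : Type) (s : seq I) (P : pred I) (F : I -> R[i]) :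
  cabs (\sum_(i <- s | P i) F i) <= \sum_(i <- s | P i) cabs (F i).
Proof.
apply: (big_rec2 (fun z r => cabs z <= r)) => [|i z r _ le_zr].
  by rewrite cabs0.
by apply: le_trans (cabsD _ _) _; rewrite lerD2l.
Qed.

Lemma cabs_conjc z : cabs (conjc z) = cabs z.
Proof. by case: z => a b; rewrite /cabs /= sqrrN. Qed.

Lemma cabs_rC r : cabs (rC r) = `|r|.
Proof. by rewrite /cabs /rC /= expr0n addr0 sqrtr_sqr. Qed.

Lemma cabs_complex_le r s : cabs (r +i* s)%C <= `|r| + `|s|.
Proof.
rewrite /cabs /= -(@ler_pXn2r _ 2) ?nnegrE ?sqrtr_ge0 ?addr_ge0 //.
rewrite sqr_sqrtr ?addr_ge0 ?sqr_ge0 // sqrrD.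
rewrite -(real_normK (num_real r)) -(real_normK (num_real s)).
by rewrite lerD2r ler_wpDr // mulrn_wge0 // mulr_ge0.
Qed.

Lemma mul_conjc z : conjc z * z = rC (cabs z ^+ 2).
Proof.
case: z => a b; rewrite /cabs /= sqr_sqrtr ?addr_ge0 ?sqr_ge0 //.
by apply/eqP; rewrite eq_complex /=; apply/andP; split; apply/eqP; ring.
Qed.

Lemma conjc_rC r : conjc (rC r) = rC r.
Proof. by rewrite /rC /= oppr0. Qed.

Lemma rC_inj : injective (@rC R).
Proof. by move=> r s []. Qed.

Lemma rCM r s : rC r * rC s = rC (r * s).
Proof. by rewrite /rC rmorphM. Qed.

Lemma rC_sum (I : Type) (s : seq I) (P : pred I) (F : I -> R) :
  \sum_(i <- s | P i) rC (F i) = rC (\sum_(i <- s | P i) F i).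
Proof. by rewrite /rC rmorph_sum. Qed.

End ComplexModulus.

Section VectorNorm.
Variables (R : realType) (p : nat) (nu : 'cV[R[i]]_p -> R).
Hypothesis nu_norm : is_vnorm nu.
Implicit Types x y z : 'cV[R[i]]_p.

Lemma nu_ge0 x : 0 <= nu x. Proof. by case: nu_norm. Qed.
Lemma nuZ c x : nu (c *: x) = cabs c * nu x. Proof. by case: nu_norm. Qed.
Lemma nuD x y : nu (x + y) <= nu x + nu y. Proof. by case: nu_norm. Qed.

Lemma nu_gt0 x : (0 < nu x) = (x != 0).
Proof.
rewrite lt_def nu_ge0 andbT; apply/idP/idP; apply: contra => /eqP.
  by move->; rewrite -(scale0r 0) nuZ cabs0 mul0r.
by case: nu_norm => _ nu_eq0 _ _ /nu_eq0 ->.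
Qed.

Lemma nu0 : nu 0 = 0.
Proof. by apply/eqP; rewrite eq_le nu_ge0 andbT leNgt nu_gt0 eqxx. Qed.

Lemma nuN x : nu (- x) = nu x.
Proof. by rewrite -scaleN1r nuZ cabsN cabs1 mul1r. Qed.

Lemma nu_sum (I : Type) (s : seq I) (P : pred I) (F : I -> 'cV[R[i]]_p) :
  nu (\sum_(i <- s | P i) F i) <= \sum_(i <- s | P i) nu (F i).
Proof.
apply: (big_rec2 (fun x r => nu x <= r)) => [|i x r _ le_xr]; first by rewrite nu0.
by apply: le_trans (nuD _ _) _; rewrite lerD2l.
Qed.

Lemma ler_nu_dist x y : `|nu x - nu y| <= nu (x - y).
Proof.
have := nuD (x - y) y; have := nuD (y - x) x.
rewrite !subrK -opprB nuN ler_norml => *; apply/andP; split; lra.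
Qed.

Lemma nu_normalize x : x != 0 -> nu (rC (nu x)^-1 *: x) = 1.
Proof.
rewrite -nu_gt0 => nu_x_gt0.
by rewrite nuZ cabs_rC gtr0_norm ?invr_gt0 // mulVf ?gt_eqF.
Qed.

Lemma nu_le_coord z : nu z <= \sum_i cabs (z i 0) * nu (delta_mx i 0).
Proof.
rewrite {1}(matrix_sum_delta z); apply: le_trans (nu_sum _ _ _) _.
by apply: ler_sum => i _; rewrite big_ord1 nuZ.
Qed.

End VectorNorm.

Section Realify.
Variables (R : realType) (p : nat).

Definition complexify (y : 'rV[R]_(p + p)) : 'cV[R[i]]_p :=
  \col_i (y 0 (lshift p i) +i* y 0 (rshift p i))%C.

Definition realify (z : 'cV[R[i]]_p) : 'rV[R]_(p + p) :=
  row_mx (\row_i complex.Re (z i 0)) (\row_i complex.Im (z i 0)).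

Lemma realifyK : cancel realify complexify.
Proof.
move=> z; apply/matrixP => i j; rewrite (ord1 j) mxE row_mxEl row_mxEr !mxE.
by case: (z i 0).
Qed.

Lemma complexifyK : cancel complexify realify.
Proof.
move=> y; apply/matrixP => i j; rewrite (ord1 i) -(splitK j).
by case: (split j) => k; rewrite ?row_mxEl ?row_mxEr !mxE.
Qed.

Lemma complexify0 : complexify 0 = 0.
Proof. by apply/matrixP => i j; rewrite !mxE. Qed.

Lemma complexifyB y w : complexify (y - w) = complexify y - complexify w.
Proof. by apply/matrixP => i j; rewrite !mxE. Qed.

Lemma complexifyZ (t : R) y : complexify (t *: y) = rC t *: complexify y.
Proof. by apply/matrixP => i j; rewrite !mxE /rC /=; congr Complex; lra. Qed.

Lemma cabs_complexify_le y i : cabs (complexify y i 0) <= 2 * `|y|.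
Proof.
have coord_le j : `|y 0 j| <= `|y|.
  rewrite [leRHS]/Num.norm /= mx_normrE.
  exact: (le_bigmax _ (fun ij : 'I_1 * 'I_(p + p) => `|y ij.1 ij.2|) (0, j)).
rewrite mxE; apply: le_trans (cabs_complex_le _ _) _.
by rewrite mulr2n mulrDl mul1r lerD.
Qed.

End Realify.

Lemma compact_unit_sphere (R : realType) (n : nat) :
  compact [set y : 'rV[R]_n | `|y| = 1].
Proof.
apply: bounded_closed_compact.
  by exists 1; split; rewrite ?num_real // => M M1 y /= ->; apply: ltW.
apply: (@closed_comp _ _ _ [set r : R | r = 1]); last exact: closed_eq.
by move=> y _; apply: norm_continuous.
Qed.

Section NormEquivalence.
Variables (R : realType) (p : nat) (nu : 'cV[R[i]]_p -> R).
Hypotheses (nu_norm : is_vnorm nu) (p_gt0 : (0 < p)%N).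

Let K : R := 2 * \sum_i nu (delta_mx i 0).

Let K_ge0 : 0 <= K.
Proof. by rewrite mulr_ge0 // sumr_ge0 // => i _; apply: nu_ge0. Qed.

Lemma nu_complexify_le y : nu (complexify y) <= K * `|y|.
Proof.
apply: le_trans (nu_le_coord nu_norm _) _.
rewrite /K mulrAC mulr_sumr; apply: ler_sum => i _.
by rewrite ler_wpM2r ?(nu_ge0 nu_norm) ?cabs_complexify_le.
Qed.

Lemma continuous_nu_complexify : continuous (nu \o @complexify R p).
Proof.
move=> y; apply/(@cvgrPdist_lt _ R^o _ _ (@nbhs_filter _ y)) => e e_gt0.
have K1_gt0 : 0 < K + 1 by rewrite ltr_wpDl.
have eK_gt0 : 0 < e / (K + 1) by rewrite divr_gt0.
apply: filterS (@cvgr_dist_lt _ 'rV[R]_(p + p) _ (nbhs y) _ id y (@cvg_id _ _) _ eK_gt0).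
move=> t /= near_yt.
apply: le_lt_trans (ler_nu_dist nu_norm _ _) _.
rewrite -complexifyB; apply: le_lt_trans (nu_complexify_le _) _.
apply: le_lt_trans (_ : K * `|y - t| <= K * (e / (K + 1))) _.
  by rewrite ler_wpM2l // ltW.
by rewrite mulrA ltr_pdivrMr // mulrC ltr_pM2l // ltrDl.
Qed.

Lemma nu_complexify_ge :
  exists2 g : R, 0 < g & forall y, g * `|y| <= nu (complexify y).
Proof.
pose S := [set y : 'rV[R]_(p + p) | `|y| = 1]%classic.
have S_nonempty : (S !=set0)%classic.
  pose e : 'rV[R]_(p + p) := delta_mx 0 (lshift p (Ordinal p_gt0)).
  have e_neq0 : e != 0.
    apply/eqP => /matrixP /(_ 0 (lshift p (Ordinal p_gt0))) /eqP.
    by rewrite !mxE !eqxx oner_eq0.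
  by exists (`|e|^-1 *: e); rewrite /S /= normrZ normfV normr_id mulVf ?normr_eq0.
have [c Sc c_min] := compact_EVT_min S_nonempty (@compact_unit_sphere R (p + p))
  (continuous_subspaceT continuous_nu_complexify).
have c_norm : `|c| = 1 by move: Sc; rewrite inE.
exists (nu (complexify c)).
  rewrite nu_gt0 // -complexify0.
  apply: contra_neq (oner_neq0 R) => /(can_inj (@complexifyK R p)) c0.
  by rewrite -c_norm c0 normr0.
move=> y; have [->|y_neq0] := eqVneq y 0; first by rewrite normr0 mulr0 nu_ge0.
have y_gt0 : 0 < `|y| by rewrite normr_gt0.
have /c_min : `|y|^-1 *: y \in S.
  by rewrite inE /S /= normrZ normfV normr_id mulVf ?gt_eqF.
by rewrite /= complexifyZ nuZ // cabs_rC ger0_norm ?invr_ge0 // ler_pdivlMl // mulrC.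
Qed.

Lemma exists_nu_coord_le :
  exists2 k : R, 0 < k & forall (z : 'cV[R[i]]_p) i, cabs (z i 0) <= k * nu z.
Proof.
have [g g_gt0 g_le] := nu_complexify_ge.
exists (2 / g); first by rewrite divr_gt0.
move=> z i; rewrite -[z]realifyK; apply: le_trans (cabs_complexify_le _ _) _.
by rewrite -mulrA ler_wpM2l // ler_pdivlMl // g_le.
Qed.

Lemma induced_norm_bounded (M : 'M[R[i]]_p) :
  has_ubound [set r : R | exists x, nu x = 1 /\ r = nu (M *m x)]%classic.
Proof.
have [k k_gt0 coord_le] := exists_nu_coord_le.
exists (\sum_i k * nu (M *m delta_mx i 0)) => _ [x [nu_x1 ->]].
rewrite {1}(matrix_sum_delta x) mulmx_sumr -[leRHS]mulr1 -nu_x1 mulr_suml.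
apply: le_trans (nu_sum nu_norm _ _ _) _; apply: ler_sum => i _.
by rewrite big_ord1 -scalemxAr nuZ // mulrAC ler_wpM2r ?(nu_ge0 nu_norm).
Qed.

Lemma nu_mulmx_le (M : 'M[R[i]]_p) z : nu (M *m z) <= induced_norm nu M * nu z.
Proof.
have [->|z_neq0] := eqVneq z 0; first by rewrite mulmx0 !(nu0 nu_norm) mulr0.
have nu_z_gt0 : 0 < nu z by rewrite nu_gt0.
have -> : nu (M *m z) = nu (M *m (rC (nu z)^-1 *: z)) * nu z.
  by rewrite -scalemxAr nuZ // cabs_rC gtr0_norm ?invr_gt0 // mulrAC mulVf ?gt_eqF ?mul1r.
rewrite ler_wpM2r ?(nu_ge0 nu_norm) //; apply: (ub_le_sup (induced_norm_bounded M)).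
by exists (rC (nu z)^-1 *: z); rewrite nu_normalize.
Qed.

Lemma induced_norm_ge0 (M : 'M[R[i]]_p) : 0 <= induced_norm nu M.
Proof.
pose e : 'cV[R[i]]_p := delta_mx (Ordinal p_gt0) 0.
have nu_e_gt0 : 0 < nu e.
  rewrite nu_gt0 //; apply/eqP => /matrixP /(_ (Ordinal p_gt0) 0) /eqP.
  by rewrite !mxE !eqxx oner_eq0.
by rewrite -(pmulr_lge0 _ nu_e_gt0) (le_trans (nu_ge0 nu_norm _) (nu_mulmx_le _ _)).
Qed.

End NormEquivalence.

Section NumericalRadius.
Variables (R : realType) (q : nat).

Lemma ctrmx_mulmx00 (x : 'cV[R[i]]_q) :
  (ctrmx x *m x) 0 0 = \sum_i conjc (x i 0) * x i 0.
Proof. by rewrite !mxE; apply: eq_bigr => i _; rewrite !mxE. Qed.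

Lemma ctrmx_mulmx_mulmx00 (A : 'M[R[i]]_q) (x : 'cV[R[i]]_q) :
  (ctrmx x *m A *m x) 0 0 = \sum_k (\sum_i conjc (x i 0) * A i k) * x k 0.
Proof.
rewrite !mxE; apply: eq_bigr => k _; rewrite !mxE; congr (_ * _).
by apply: eq_bigr => i _; rewrite !mxE.
Qed.

Lemma numrad_bounded (A : 'M[R[i]]_q) :
  has_ubound [set r : R | exists x : 'cV[R[i]]_q,
    (ctrmx x *m x) 0 0 = 1 /\ r = cabs ((ctrmx x *m A *m x) 0 0)]%classic.
Proof.
exists (\sum_k \sum_i cabs (A i k)) => _ [x [x_unit ->]].
have x_le1 i : cabs (x i 0) <= 1.
  move: x_unit; rewrite ctrmx_mulmx00; under eq_bigr => j _ do rewrite mul_conjc.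
  rewrite rC_sum -/(rC 1) => /rC_inj sum_sq1.
  have : cabs (x i 0) ^+ 2 <= 1.
    by rewrite -sum_sq1 (bigD1 i) //= lerDl sumr_ge0 // => j _; apply: sqr_ge0.
  by have := cabs_ge0 (x i 0); nra.
rewrite ctrmx_mulmx_mulmx00; apply: le_trans (cabs_sum _ _ _) _.
apply: ler_sum => k _; rewrite cabsM -[leRHS]mulr1 ler_pM ?cabs_ge0 //.
apply: le_trans (cabs_sum _ _ _) _; apply: ler_sum => i _.
by rewrite cabsM cabs_conjc -[leRHS]mul1r ler_wpM2r ?cabs_ge0.
Qed.

Lemma quad_form_le_numrad (M : 'M[R]_q) (u : 'I_q -> R) :
  \sum_k (\sum_i u i * M i k) * u k <= numrad (map_mx (@rC R) M) * \sum_i u i ^+ 2.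
Proof.
set S := \sum_i u i ^+ 2; set Qu := \sum_k _.
have [S0|S_neq0] := eqVneq S 0.
  have u0 i : u i = 0.
    apply/eqP; rewrite -sqrf_eq0; apply/eqP.
    by apply: (psumr_eq0P (fun j _ => sqr_ge0 (u j)) S0).
  by rewrite /Qu S0 mulr0 big1 // => k _; rewrite u0 mulr0.
have S_gt0 : 0 < S by rewrite lt_def S_neq0 sumr_ge0 // => i _; apply: sqr_ge0.
set s := Num.sqrt S.
have s_gt0 : 0 < s by rewrite sqrtr_gt0.
have ss : s * s = S by rewrite -expr2 sqr_sqrtr // ltW.
pose x : 'cV[R[i]]_q := \col_i rC (u i / s).
have x_unit : (ctrmx x *m x) 0 0 = 1.
  rewrite ctrmx_mulmx00; under eq_bigr => i _ do rewrite !mxE conjc_rC rCM.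
  rewrite rC_sum -/(rC 1); congr rC.
  under eq_bigr => i _ do rewrite -expr2 expr_div_n.
  by rewrite -mulr_suml -/S expr2 ss divff.
have x_quad : (ctrmx x *m map_mx (@rC R) M *m x) 0 0 = rC (Qu / S).
  rewrite ctrmx_mulmx_mulmx00.
  under eq_bigr => k _ do (under eq_bigr => i _ do rewrite !mxE conjc_rC rCM;
                          rewrite rC_sum !mxE rCM).
  rewrite rC_sum /Qu mulr_suml -ss; congr rC; apply: eq_bigr => k _.
  have -> : \sum_i u i / s * M i k = (\sum_i u i * M i k) / s.
    by rewrite mulr_suml; apply: eq_bigr => i _; rewrite mulrAC.
  by field; rewrite gt_eqF.
rewrite -ler_pdivrMr //; apply: le_trans (ler_norm _) _.
rewrite -cabs_rC -x_quad; apply: (ub_le_sup (numrad_bounded _)).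
by exists x.
Qed.

End NumericalRadius.

Section RealInequalities.
Variable R : realType.

Lemma sum_poly_lt m (m_gt0 : (0 < m)%N) (c : 'I_m -> R) (x M : R) :
  0 < x -> (forall i, 0 <= c i) -> (forall i : 'I_m, (0 < i)%N -> 1 + c i < x) ->
  c (Ordinal m_gt0) + M < x -> \sum_(i < m) c i * x ^+ i + M < x ^+ m.
Proof.
move=> x_gt0; case: m m_gt0 c => // n m_gt0 c.
rewrite (_ : Ordinal m_gt0 = ord0); last exact: val_inj.
elim: n c {m_gt0} => [|n IHn] c c_ge0 c_lt c0_lt.
  by rewrite big_ord1 mulr1 expr1.
have IH : \sum_(i < n.+1) c (widen_ord (leqnSn _) i) * x ^+ i + M < x ^+ n.+1.
  apply: IHn => [i|i|]; [exact: c_ge0 | exact: (c_lt (widen_ord _ i)) | ].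
  by rewrite (_ : widen_ord _ _ = ord0) //; apply: val_inj.
have := c_lt ord_max isT; rewrite -(ltr_pM2r (exprn_gt0 n.+1 x_gt0)) mulrDl mul1r -exprS.
by rewrite big_ord_recr /=; move: IH; lra.
Qed.

Lemma sum_mul_sqr_le (I : Type) (s : seq I) (P : pred I) (u v : I -> R) :
  (\sum_(i <- s | P i) u i * v i) ^+ 2 <=
  (\sum_(i <- s | P i) u i ^+ 2) * (\sum_(i <- s | P i) v i ^+ 2).
Proof.
elim: s => [|i s IHs]; first by rewrite !big_nil expr0n mul0r.
rewrite !big_cons; case: (P i) => //.
have A_ge0 : 0 <= \sum_(j <- s | P j) u j ^+ 2.
  by rewrite sumr_ge0 // => j _; apply: sqr_ge0.
have C_ge0 : 0 <= \sum_(j <- s | P j) v j ^+ 2.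
  by rewrite sumr_ge0 // => j _; apply: sqr_ge0.
move: IHs A_ge0 C_ge0; set A := \sum_(j <- s | P j) u j ^+ 2.
set B := \sum_(j <- s | P j) u j * v j; set C := \sum_(j <- s | P j) v j ^+ 2.
move=> BAC A_ge0 C_ge0.
suff cross : 2 * (u i * v i) * B <= u i ^+ 2 * C + v i ^+ 2 * A by nra.
have [A0|A_neq0] := eqVneq A 0.
  have B0 : B = 0 by apply/eqP; rewrite -sqrf_eq0 eq_le sqr_ge0 andbT -(mul0r C) -A0.
  by rewrite A0 B0 mulr0 mulr0 addr0 mulr_ge0 ?sqr_ge0.
have A_gt0 : 0 < A by rewrite lt_def A_neq0.
have := sqr_ge0 (A * v i - B * u i).
have : 0 <= u i ^+ 2 * (A * C - B ^+ 2) by rewrite mulr_ge0 ?sqr_ge0 ?subr_ge0.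
nra.
Qed.

Lemma sum_mul_le_sqrt (I : Type) (s : seq I) (P : pred I) (u v : I -> R) :
  \sum_(i <- s | P i) u i * v i <=
  Num.sqrt (\sum_(i <- s | P i) u i ^+ 2) * Num.sqrt (\sum_(i <- s | P i) v i ^+ 2).
Proof.
rewrite -sqrtrM ?sumr_ge0 // => [|i _]; last exact: sqr_ge0.
apply: le_trans (ler_norm _) _; rewrite -sqrtr_sqr ler_wsqrtr //.
exact: sum_mul_sqr_le.
Qed.

(* The right-hand side involves the largest eigenvalue of [[al, g/2], [g/2, be]]. *)
Lemma quad_form_le_max_eig (al be g F E : R) :
  al * F ^+ 2 + be * E ^+ 2 + g * F * E <=
  (al + be + Num.sqrt ((al - be) ^+ 2 + g ^+ 2)) / 2 * (F ^+ 2 + E ^+ 2).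
Proof.
set s := Num.sqrt _.
have s_sq : s ^+ 2 = (al - be) ^+ 2 + g ^+ 2 by rewrite sqr_sqrtr // addr_ge0 ?sqr_ge0.
have : `|al - be| <= s by rewrite -sqrtr_sqr ler_wsqrtr // lerDl sqr_ge0.
rewrite ler_norml => /andP[s_ge1 s_ge2].
pose P := (be - al + s) / 2; pose Q := (al - be + s) / 2.
have P_ge0 : 0 <= P by rewrite /P; lra.
have Q_ge0 : 0 <= Q by rewrite /Q; lra.
have PQ : 4 * P * Q = g ^+ 2.
  by rewrite /P /Q -[g ^+ 2](addKr ((al - be) ^+ 2)) -s_sq; field.
suff : 0 <= P * F ^+ 2 + Q * E ^+ 2 - g * F * E by rewrite /P /Q; lra.
have [s0|s_neq0] := eqVneq s 0.
  have al_be : al - be = 0 by lra.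
  have -> : g = 0.
    by apply/eqP; rewrite -sqrf_eq0; move: s_sq; rewrite s0 al_be expr0n add0r => <-.
  by rewrite mul0r mul0r subr0 addr_ge0 // mulr_ge0 ?sqr_ge0.
have s_gt0 : 0 < s by rewrite lt_def s_neq0 sqrtr_ge0.
have PQ_gt0 : 0 < P + Q by rewrite /P /Q; lra.
(* Since 4 P Q = g^2, (P + Q) times the goal is (P F - g E/2)^2 + (Q E - g F/2)^2. *)
have := sqr_ge0 (P * F - g * E / 2); have := sqr_ge0 (Q * E - g * F / 2).
nra.
Qed.

End RealInequalities.

Section PathBound.
Variable R : realType.

Lemma amgm_weighted (a b p q : R) : 0 < p -> 0 < q ->
  2 * (a * b) <= a ^+ 2 / p * q + b ^+ 2 / q * p.
Proof.
move=> p_gt0 q_gt0; rewrite -subr_ge0.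
have -> : a ^+ 2 / p * q + b ^+ 2 / q * p - 2 * (a * b) = (a * q - b * p) ^+ 2 / (p * q).
  by field; rewrite !gt_eqF.
by rewrite divr_ge0 ?sqr_ge0 // mulr_ge0 ?ltW.
Qed.

Lemma sinB_add_sinD (a t : R) : sin (a - t) + sin (a + t) = 2 * cos t * sin a.
Proof. by rewrite sinB sinD; ring. Qed.

Lemma sum_path_le_cos (K : nat) (f : nat -> R) : (0 < K)%N ->
  \sum_(2 <= k < K.+1) f k * f k.-1 <=
  cos (pi / K.+1%:R) * \sum_(1 <= k < K.+1) f k ^+ 2.
Proof.
(* s_k = sin (k pi / (K + 1)) is a positive eigenvector of the path adjacency
   matrix for 2 cos (pi / (K + 1)); weight AM-GM on each edge by it. *)
move=> K_gt0; set t := pi / K.+1%:R.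
pose s (k : nat) := sin (k%:R * t).
have s0 : s 0%N = 0 by rewrite /s mul0r sin0.
have sK : s K.+1 = 0 by rewrite /s /t mulrC divfK ?sinpi ?pnatr_eq0.
have s_gt0 k : (0 < k <= K)%N -> 0 < s k.
  case/andP => k_gt0 k_le; apply: sin_gt0_pi.
  rewrite mulr_gt0 ?ltr0n ?divr_gt0 ?pi_gt0 //=.
  by rewrite /t mulrA ltr_pdivrMr ?ltr0n // mulrC ltr_pM2l ?pi_gt0 // ltr_nat ltnS.
have s_rec k : (0 < k)%N -> s k.-1 + s k.+1 = 2 * cos t * s k.
  case: k => // k _; rewrite /s -sinB_add_sinD.
  by congr (sin _ + sin _); rewrite [_.+1%:R]mulrSr mulrDl mul1r ?addrK.
pose w k := f k ^+ 2 / s k.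
have edge k : (2 <= k <= K)%N -> 2 * (f k * f k.-1) <= w k * s k.-1 + w k.-1 * s k.
  case: k => // k /andP[k_gt0 k_le]; rewrite /w.
  by apply: amgm_weighted; apply: s_gt0; rewrite /= ?k_le ?(ltnW k_le) ?andbT.
have sum_edges : 2 * \sum_(2 <= k < K.+1) f k * f k.-1 <=
    \sum_(1 <= k < K.+1) w k * (s k.-1 + s k.+1).
  rewrite mulr_sumr.
  apply: le_trans (_ : _ <= \sum_(2 <= k < K.+1) (w k * s k.-1 + w k.-1 * s k)) _.
    by apply: ler_sum_nat => k /andP[k_ge2 k_le]; apply: edge; rewrite k_ge2 -ltnS.
  have drop_s0 : \sum_(2 <= k < K.+1) w k * s k.-1 = \sum_(1 <= k < K.+1) w k * s k.-1.
    by rewrite [RHS]big_ltn ?ltnS // s0 mulr0 add0r.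
  have drop_sK : \sum_(2 <= k < K.+1) w k.-1 * s k = \sum_(1 <= k < K.+1) w k * s k.+1.
    by rewrite big_add1 /= [RHS]big_nat_recr //= sK mulr0 addr0.
  by rewrite big_split /= drop_s0 drop_sK -big_split /=; under eq_bigr do rewrite -mulrDr.
have sum_w : \sum_(1 <= k < K.+1) w k * (s k.-1 + s k.+1) =
    2 * cos t * \sum_(1 <= k < K.+1) f k ^+ 2.
  rewrite mulr_sumr; apply: eq_big_nat => k /andP[k_gt0 k_le].
  by rewrite s_rec // /w; field; rewrite gt_eqF // s_gt0 // k_gt0 -ltnS.
by move: sum_edges; rewrite sum_w -mulrA ler_pM2l.
Qed.

End PathBound.

(* Read x = |lam0|, c_i = ||C_i||, al_j = |a_j|, b j k = ||B_k^(j)|| and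
   r_j = 1 / |lam0 - a_j|; x_le_pole and x_pow_le are all that is used of the
   eigenvalue. *)
Section ScalarBounds.
Variables (R : realType) (m n : nat) (x : R) (c : 'I_m -> R).
Variables (al r : 'I_n -> R) (mj : 'I_n -> nat) (b : 'I_n -> nat -> R).
Hypotheses (m_gt0 : (0 < m)%N) (n_gt0 : (0 < n)%N).
Hypotheses (c_ge0 : forall i, 0 <= c i) (b_ge0 : forall j k, 0 <= b j k).
Hypotheses (al_ge0 : forall j, 0 <= al j) (r_gt0 : forall j, 0 < r j).
Hypothesis x_le_pole : forall j, x <= al j + (r j)^-1.

Local Notation T := (\sum_(j < n) \sum_(1 <= k < (mj j).+1) b j k * r j ^+ k).

Hypothesis x_pow_le : x ^+ m <= \sum_(i < m) c i * x ^+ i + T.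

Lemma pole_lt1 j : 1 + al j < x -> r j < 1.
Proof.
move=> al_lt; have : 1 < (r j)^-1 by have := x_le_pole j; lra.
by rewrite invf_gt1.
Qed.

Lemma coef_mul_pole_le1 j k : al j + b j k < x -> b j k * r j <= 1.
Proof.
move=> ab_lt; have : b j k < (r j)^-1 by have := x_le_pole j; lra.
by rewrite -[(r j)^-1]mul1r ltr_pdivlMr // => /ltW.
Qed.

Lemma bound_sum_norms :
  x <= Num.max (\big[Num.max/0]_(j < n) (1 + al j))
               (\sum_(j < n) \sum_(1 <= k < (mj j).+1) b j k + \sum_(i < m) c i).
Proof.
rewrite leNgt gt_max; apply/negP => /andP[/bigmax_ltP[_ al_lt]].
set B := \sum_(j < n) _; set C := \sum_(i < m) _ => sum_lt.
have x_gt1 : 1 < x.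
  by apply: le_lt_trans (al_lt (Ordinal n_gt0) isT); rewrite lerDl.
set X := x ^+ m.-1.
have X_ge1 : 1 <= X by rewrite exprn_ege1 // ltW.
have xm : x ^+ m = x * X by rewrite /X -exprS prednK.
have T_le : T <= B.
  apply: ler_sum => j _; apply: ler_sum => k _.
  by rewrite ler_piMr // exprn_ile1 ?ltW ?pole_lt1 ?al_lt.
have sum_c_le : \sum_(i < m) c i * x ^+ i <= C * X.
  rewrite mulr_suml; apply: ler_sum => i _; rewrite ler_wpM2l //.
  by rewrite ler_weXn2l ?ltW // -ltnS prednK.
have B_le : B <= B * X by rewrite ler_peMr // sumr_ge0 // => j _; rewrite sumr_ge0.
have : (B + C) * X < x * X by rewrite ltr_pM2r // (lt_le_trans ltr01).
by move: x_pow_le T_le sum_c_le; rewrite xm; lra.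
Qed.

Lemma bound_poly : (forall j k, (0 < k <= mj j)%N -> b j k * r j ^+ k <= 1) ->
  x <= Num.max (\big[Num.max/0]_(i < m | (1 <= i)%N) (1 + c i))
               (c (Ordinal m_gt0) + (\sum_(j < n) mj j)%:R).
Proof.
move=> br_le1; rewrite leNgt gt_max; apply/negP => /andP[/bigmax_ltP[_ c_lt] c0_lt].
have x_gt0 : 0 < x by apply: le_lt_trans c0_lt; rewrite addr_ge0.
have T_le : T <= (\sum_(j < n) mj j)%:R.
  rewrite natr_sum; apply: ler_sum => j _.
  apply: le_trans (_ : _ <= \sum_(1 <= k < (mj j).+1) 1) _.
    by apply: ler_sum_nat => k /andP[k_gt0 k_le]; apply: br_le1; rewrite k_gt0 -ltnS.
  by rewrite sumr_const_nat subn1.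
by have := sum_poly_lt x_gt0 c_ge0 c_lt c0_lt; move: x_pow_le T_le; lra.
Qed.

Lemma bound_simple_poles : (forall j, mj j = 1%N) ->
  x <= Num.max (\big[Num.max/0]_(j < n) (al j + b j 1%N))
        (Num.max (\big[Num.max/0]_(i < m | (1 <= i)%N) (1 + c i))
                 (c (Ordinal m_gt0) + n%:R)).
Proof.
move=> mj1; rewrite le_max; case: leP => //= /bigmax_ltP[_ ab_lt].
have -> : n = (\sum_(j < n) mj j)%N.
  by rewrite (eq_bigr (fun=> 1%N)) // sum1_card card_ord.
apply: bound_poly => j k; rewrite mj1 -eqn_leq => /eqP <-.
by rewrite expr1 coef_mul_pole_le1 ?ab_lt.
Qed.

Lemma bound_poles :
  x <= Num.max (\big[Num.max/0]_(j < n) \big[Num.max/0]_(1 <= k < (mj j).+1)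
                   (al j + b j k))
        (Num.max (\big[Num.max/0]_(j < n) (1 + al j))
          (Num.max (\big[Num.max/0]_(i < m | (1 <= i)%N) (1 + c i))
                   (c (Ordinal m_gt0) + (\sum_(j < n) mj j)%:R))).
Proof.
rewrite le_max; case: leP => //= /bigmax_ltP[_ ab_lt].
rewrite le_max; case: leP => //= /bigmax_ltP[_ al_lt].
apply: bound_poly => j k /andP[k_gt0 k_le].
have r_le1 : r j <= 1 by rewrite ltW ?pole_lt1 ?al_lt.
have br_le1 : b j k * r j <= 1.
  apply: coef_mul_pole_le1; apply: le_lt_trans (ab_lt j isT).
  apply: (le_bigmax_seq 0 k xpredT (fun k => al j + b j k)) => //.
  by rewrite mem_index_iota k_gt0 ltnS.
apply: le_trans br_le1; rewrite -[in r j ^+ k](prednK k_gt0) exprS mulrA.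
by rewrite ler_piMr ?mulr_ge0 ?b_ge0 ?exprn_ile1 ?(ltW (r_gt0 j)).
Qed.

End ScalarBounds.

Lemma compB0_mul_pow (R : realType) m (c : 'I_m -> R) (y : R) (i : 'I_m) :
  \sum_k compB0 c i k * y ^+ k =
  if i.+1 == m then \sum_k c k * y ^+ k else y ^+ i.+1.
Proof.
under eq_bigr => k _ do rewrite mxE.
case: (i.+1 =P m) => // i_not_last.
have i_succ : (i.+1 < m)%N by rewrite ltn_neqAle ltn_ord andbT; apply/eqP.
rewrite (bigD1 (Ordinal i_succ)) //= eqxx mul1r big1 ?addr0 // => k k_neq.
by rewrite ifN ?mul0r //; apply: contra k_neq => /eqP k_eq; apply/eqP/val_inj.
Qed.

Section NumradBound.
Variables (R : realType) (m n : nat) (x : R) (c : 'I_m -> R).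
Variables (al r : 'I_n -> R) (mj : 'I_n -> nat) (b : 'I_n -> nat -> R) (be : R).
Hypotheses (m_gt0 : (0 < m)%N) (x_ge0 : 0 <= x) (b_ge0 : forall j k, 0 <= b j k).
Hypotheses (r_gt0 : forall j, 0 < r j) (mj_gt0 : forall j, (0 < mj j)%N).
Hypothesis x_le_pole : forall j, x <= al j + (r j)^-1.

Local Notation T := (\sum_(j < n) \sum_(1 <= k < (mj j).+1) b j k * r j ^+ k).

Hypothesis x_pow_le : x ^+ m <= \sum_(i < m) c i * x ^+ i + T.
Hypothesis quad_form_le : forall u : 'I_m -> R,
  \sum_k (\sum_i u i * compB0 c i k) * u k <= be * \sum_i u i ^+ 2.

Local Notation Fr j := (\sum_(1 <= k < (mj j).+1) (r j ^+ k) ^+ 2).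
Local Notation alpha := (\big[Num.max/0]_(j < n) (al j + cos (pi / (mj j).+1%:R))).

Lemma Fr_ge0 j : 0 <= Fr j.
Proof. by rewrite sumr_ge0 // => k _; apply: sqr_ge0. Qed.

Lemma T_ge0 : 0 <= T.
Proof.
rewrite sumr_ge0 // => j _; rewrite sumr_ge0 // => k _.
by rewrite mulr_ge0 ?exprn_ge0 ?b_ge0 ?ltW.
Qed.

Lemma companion_quad_ge :
  x * \sum_(i < m) (x ^+ i) ^+ 2 <=
  \sum_(k < m) (\sum_(i < m) x ^+ i * compB0 c i k) * x ^+ k + x ^+ m.-1 * T.
Proof.
have last_row : (m.-1 < m)%N by rewrite prednK.
have -> : \sum_(k < m) (\sum_(i < m) x ^+ i * compB0 c i k) * x ^+ k =
          \sum_(i < m) x ^+ i * \sum_(k < m) compB0 c i k * x ^+ k.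
  under eq_bigr => k _ do rewrite mulr_suml.
  rewrite exchange_big; apply: eq_bigr => i _; rewrite mulr_sumr.
  by apply: eq_bigr => k _; rewrite mulrA.
have -> : x ^+ m.-1 * T = \sum_(i < m) (if i.+1 == m then x ^+ i * T else 0).
  rewrite (bigD1 (Ordinal last_row)) //= prednK // eqxx.
  rewrite [X in _ + X]big1 ?addr0 // => i i_neq.
  by rewrite ifN //; apply: contra i_neq => i_last; rewrite -val_eqE /= -eqSS prednK.
rewrite -big_split mulr_sumr; apply: ler_sum => i _ /=.
have -> : x * (x ^+ i) ^+ 2 = x ^+ i * x ^+ i.+1 by rewrite [x ^+ i.+1]exprS expr2 mulrCA.
rewrite compB0_mul_pow; case: (i.+1 =P m) => [i_last|_]; last by rewrite addr0.
by rewrite -mulrDr ler_wpM2l ?exprn_ge0 // i_last.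
Qed.

Lemma pole_quad_le j :
  x * Fr j <= (al j + cos (pi / (mj j).+1%:R)) * Fr j + r j.
Proof.
have r_neq0 : r j != 0 by rewrite gt_eqF.
have x_Fr : x * Fr j <= (al j + (r j)^-1) * Fr j by rewrite ler_wpM2r ?Fr_ge0.
have inv_Fr : (r j)^-1 * Fr j =
    r j + \sum_(2 <= k < (mj j).+1) r j ^+ k * r j ^+ k.-1.
  rewrite mulr_sumr big_ltn ?ltnS // expr1; congr (_ + _); first by field.
  apply: eq_big_nat => k /andP[k_ge2 _]; case: k k_ge2 => // k _.
  by rewrite /= [r j ^+ k.+1]exprS; field.
have := sum_path_le_cos (fun k => r j ^+ k) (mj_gt0 j).
by move: x_Fr; rewrite mulrDl inv_Fr mulrDl; lra.
Qed.

Lemma path_quad_le :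
  x * \sum_(j < n) Fr j <= alpha * \sum_(j < n) Fr j + \sum_(j < n) r j.
Proof.
rewrite !mulr_sumr -big_split; apply: ler_sum => j _ /=.
apply: le_trans (pole_quad_le j) _; rewrite lerD2r ler_wpM2r ?Fr_ge0 //.
exact: (le_bigmax 0 (fun j => al j + cos (pi / (mj j).+1%:R))).
Qed.

Lemma sum_pole_le :
  \sum_(j < n) r j <=
  Num.sqrt (\sum_(j < n) mj j)%:R * Num.sqrt (\sum_(j < n) Fr j).
Proof.
under eq_bigr do rewrite -[r _]mul1r.
apply: le_trans (sum_mul_le_sqrt _ _ _ _) _.
rewrite ler_pM ?sqrtr_ge0 // ler_wsqrtr //.
  rewrite natr_sum; apply: ler_sum => j _; rewrite expr1n ler1n; exact: mj_gt0.
apply: ler_sum => j _; rewrite big_ltn ?ltnS // expr1 lerDl.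
by rewrite sumr_ge0 // => k _; apply: sqr_ge0.
Qed.

Lemma T_le_sqrt :
  T <= Num.sqrt (\sum_(j < n) \sum_(1 <= k < (mj j).+1) b j k ^+ 2) *
       Num.sqrt (\sum_(j < n) Fr j).
Proof.
apply: le_trans (_ : _ <= \sum_(j < n) Num.sqrt (\sum_(1 <= k < (mj j).+1) b j k ^+ 2) *
                             Num.sqrt (Fr j)) _.
  by apply: ler_sum => j _; apply: sum_mul_le_sqrt.
apply: le_trans (sum_mul_le_sqrt _ _ _ _) _.
by rewrite !(eq_bigr _ (fun j _ => sqr_sqrtr _)) // => j _;
  rewrite sumr_ge0 // => k _; apply: sqr_ge0.
Qed.

Local Notation gamma := (Num.sqrt ((\sum_(j < n) mj j)%:R : R)).
Local Notation delta := (Num.sqrt (\sum_(j < n) \sum_(1 <= k < (mj j).+1) b j k ^+ 2)).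

Lemma bound_numrad :
  x <= (alpha + be + Num.sqrt ((alpha - be) ^+ 2 + (gamma + delta) ^+ 2)) / 2.
Proof.
have rows := companion_quad_ge; have /= quad := quad_form_le (fun i => x ^+ i).
have poles := path_quad_le; have r_le := sum_pole_le.
set E2 := \sum_(i < m) (x ^+ i) ^+ 2; set F2 := \sum_(j < n) Fr j.
set E := Num.sqrt E2; set F := Num.sqrt F2.
have E2_ge1 : 1 <= E2.
  rewrite /E2 (bigD1 (Ordinal m_gt0)) //= expr0 expr1n lerDl.
  by rewrite sumr_ge0 // => i _; apply: sqr_ge0.
have F2_ge0 : 0 <= F2 by rewrite sumr_ge0 // => j _; apply: Fr_ge0.
have E_ge1 : 1 <= E by rewrite -sqrtr1 ler_wsqrtr.
have EE : E ^+ 2 = E2 by rewrite sqr_sqrtr // (le_trans ler01).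
have FF : F ^+ 2 = F2 by rewrite sqr_sqrtr.
have x_last_le : x ^+ m.-1 <= E.
  rewrite -(ger0_norm (exprn_ge0 _ x_ge0)) -sqrtr_sqr ler_wsqrtr //.
  have last_row : (m.-1 < m)%N by rewrite prednK.
  by rewrite /E2 (bigD1 (Ordinal last_row)) //= lerDl sumr_ge0 // => i _; apply: sqr_ge0.
have tail_le : x ^+ m.-1 * T <= E * (delta * F).
  by rewrite ler_pM ?exprn_ge0 ?T_ge0 ?T_le_sqrt.
have r_le' : \sum_(j < n) r j <= gamma * F * E.
  apply: le_trans r_le _; rewrite -[leLHS]mulr1 ler_wpM2l // mulr_ge0 ?sqrtr_ge0 //.
have rho_ge : x * (F ^+ 2 + E ^+ 2) <=
    alpha * F ^+ 2 + be * E ^+ 2 + (gamma + delta) * F * E.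
  by rewrite FF EE; move: rows quad poles tail_le r_le'; rewrite -/E2 -/F2; lra.
have FE_gt0 : 0 < F ^+ 2 + E ^+ 2 by rewrite ltr_wpDl ?sqr_ge0 // EE (lt_le_trans ltr01).
by rewrite -(ler_pM2r FE_gt0); apply: le_trans rho_ge (quad_form_le_max_eig _ _ _ _ _).
Qed.

End NumradBound.

Section Eigenvalue.
Variables (R : realType) (p m n : nat) (nu : 'cV[R[i]]_p -> R).
Hypotheses (nu_norm : is_vnorm nu) (p_gt0 : (0 < p)%N).
Variables (C : 'I_m -> 'M[R[i]]_p) (a : 'I_n -> R[i]) (mj : 'I_n -> nat).
Variables (B : 'I_n -> nat -> 'M[R[i]]_p) (lam0 : R[i]).
Hypothesis eig : is_eigenvalue C a mj B lam0.

Lemma eigen_pow_le :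
  cabs lam0 ^+ m <=
  \sum_(i < m) induced_norm nu (C i) * cabs lam0 ^+ i +
  \sum_(j < n) \sum_(1 <= k < (mj j).+1)
     induced_norm nu (B j k) * (cabs (lam0 - a j))^-1 ^+ k.
Proof.
have [_ [v [v_neq0 Rv0]]] := eig.
set w := rC (nu v)^-1 *: v.
have nu_w : nu w = 1 by rewrite nu_normalize.
have N_le M : nu (M *m w) <= induced_norm nu M.
  by rewrite -[leRHS]mulr1 -nu_w nu_mulmx_le.
have Rw0 : Rmat C a mj B lam0 *m w = 0 by rewrite -scalemxAr Rv0 scaler0.
rewrite -[cabs _ ^+ m]mulr1 -nu_w -cabsX -nuZ //.
move/eqP: Rw0; rewrite /Rmat mulmxDl mulmxBl -scalemxAl mul1mx addr_eq0 subr_eq.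
move=> /eqP ->.
apply: le_trans (nuD nu_norm _ _) _; rewrite nuN // addrC lerD //.
  rewrite mulmx_suml; apply: le_trans (nu_sum nu_norm _ _ _) _; apply: ler_sum => i _.
  by rewrite -scalemxAl nuZ // cabsX mulrC ler_wpM2r ?exprn_ge0 ?cabs_ge0 ?N_le.
rewrite mulmx_suml; apply: le_trans (nu_sum nu_norm _ _ _) _; apply: ler_sum => j _.
rewrite mulmx_suml; apply: le_trans (nu_sum nu_norm _ _ _) _; apply: ler_sum => k _.
rewrite -scalemxAl nuZ // cabsV cabsX -exprVn mulrC ler_wpM2r ?N_le //.
by rewrite exprn_ge0 ?invr_ge0 ?cabs_ge0.
Qed.

Lemma pole_dist_gt0 j : 0 < (cabs (lam0 - a j))^-1.
Proof. by rewrite invr_gt0 cabs_gt0 subr_eq0; case: eig. Qed.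

End Eigenvalue.

Theorem theorem3p9 (R : realType) (p m n : nat) (hp : (0 < p)%N) (hm : (0 < m)%N)
  (hn : (0 < n)%N)
  (a : 'I_n -> R[i]) (a_inj : injective a)
  (mj : 'I_n -> nat) (mj_pos : forall j, (0 < mj j)%N)
  (C : 'I_m -> 'M[R[i]]_p) (B : 'I_n -> nat -> 'M[R[i]]_p)
  (nu : 'cV[R[i]]_p -> R) (hnu : is_vnorm nu)
  (lam0 : R[i]) (heig : is_eigenvalue C a mj B lam0) :
  let N := induced_norm nu in
  let C0 := C (Ordinal hm) in
  let mxr : R -> R -> R := Num.max in
  (* (1) *)
  [/\ cabs lam0 <=
        mxr (\big[mxr/0]_(j < n) (1 + cabs (a j)))
            (\sum_(j < n) \sum_(1 <= k < (mj j).+1) N (B j k)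
             + \sum_(i < m) N (C i)),
  (* (2), case all m_j = 1 *)
      (forall j, mj j = 1%N) ->
      cabs lam0 <=
        mxr (\big[mxr/0]_(j < n) (cabs (a j) + N (B j 1%N)))
          (mxr (\big[mxr/0]_(i < m | (1 <= i)%N) (1 + N (C i)))
               (N C0 + n%:R)),
  (* (2), otherwise *)
      ~ (forall j, mj j = 1%N) ->
      cabs lam0 <=
        mxr (\big[mxr/0]_(j < n) \big[mxr/0]_(1 <= k < (mj j).+1)
                 (cabs (a j) + N (B j k)))
          (mxr (\big[mxr/0]_(j < n) (1 + cabs (a j)))
            (mxr (\big[mxr/0]_(i < m | (1 <= i)%N) (1 + N (C i)))
                 (N C0 + (\sum_(j < n) mj j)%:R)))
  (* (3) *)
    & let alpha := \big[mxr/0]_(j < n) (cabs (a j) + cos (pi / ((mj j).+1)%:R)) in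
      let beta := numrad (map_mx (@rC R) (compB0 (fun i => N (C i)))) in
      let gamma := Num.sqrt ((\sum_(j < n) mj j)%:R : R) in
      let delta := Num.sqrt (\sum_(j < n) \sum_(1 <= k < (mj j).+1) N (B j k) ^+ 2) in
      cabs lam0 <= (alpha + beta
                    + Num.sqrt ((alpha - beta) ^+ 2 + (gamma + delta) ^+ 2)) / 2].
Proof.
move=> N C0 mxr.
pose r j := (cabs (lam0 - a j))^-1.
have c_ge0 i : 0 <= N (C i) := induced_norm_ge0 hnu hp _.
have b_ge0 j k : 0 <= N (B j k) := induced_norm_ge0 hnu hp _.
have al_ge0 j : 0 <= cabs (a j) := cabs_ge0 _.
have r_gt0 j : 0 < r j := pole_dist_gt0 heig j.
have x_le_pole j : cabs lam0 <= cabs (a j) + (r j)^-1 by rewrite invrK cabs_le_dist.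
have x_pow_le := eigen_pow_le hnu hp heig.
split.
- exact: bound_sum_norms hm hn c_ge0 b_ge0 al_ge0 r_gt0 x_le_pole x_pow_le.
- exact: bound_simple_poles hm c_ge0 r_gt0 x_le_pole x_pow_le.
- by move=> _; exact: bound_poles hm c_ge0 b_ge0 r_gt0 x_le_pole x_pow_le.
- exact: bound_numrad hm (cabs_ge0 _) b_ge0 r_gt0 mj_pos x_le_pole x_pow_le
    (quad_form_le_numrad _).
Qed.
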